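(* Let $d = 2$ and $\hat X \in U(2)$. Let $F = \int d\psi\, |\langle\psi|\hat X|\psi\rangle|^2$ and $D = \sqrt{\int d\psi\, |\langle\psi|\hat X|\psi\rangle|^4 - F^2}$. Then $$D = \frac{1-F}{\sqrt 5}.$$
   Context: $d\psi$ denotes the unitarily invariant (Haar-induced) probability measure on unit vectors of $\mathbb{C}^2$. *)

From Stdlib Require Import Reals.
From Coquelicot Require Import Coquelicot.
Open Scope R_scope.

(* A 2x2 complex matrix, entries indexed by i, j in {0,1}. *)
Definition mat2 := nat -> nat -> C.

Definition unitary2 (X : mat2) : Prop :=
  forall i j : nat, (i < 2)%nat -> (j < 2)%nat ->
    Cplus (Cmult (Cconj (X 0%nat i)) (X 0%nat j))
          (Cmult (Cconj (X 1%nat i)) (X 1%nat j))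
    = (if Nat.eqb i j then RtoC 1 else RtoC 0).

Definition vec2 := nat -> C.

Definition expval (X : mat2) (psi : vec2) : C :=
  Cplus
    (Cplus (Cmult (Cconj (psi 0%nat)) (Cmult (X 0%nat 0%nat) (psi 0%nat)))
           (Cmult (Cconj (psi 0%nat)) (Cmult (X 0%nat 1%nat) (psi 1%nat))))
    (Cplus (Cmult (Cconj (psi 1%nat)) (Cmult (X 1%nat 0%nat) (psi 0%nat)))
           (Cmult (Cconj (psi 1%nat)) (Cmult (X 1%nat 1%nat) (psi 1%nat)))).

Definition cis (t : R) : C := (cos t, sin t).

(* Hopf coordinates of the unit sphere S^3 of C^2:
   psi = (cos a e^{i b}, sin a e^{i g}),  a in [0,pi/2], b,g in [0,2pi). *)
Definition hopf_psi (a b g : R) : vec2 :=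
  fun i => if Nat.eqb i 0 then Cmult (RtoC (cos a)) (cis b)
           else Cmult (RtoC (sin a)) (cis g).

(* Integral against the unitarily invariant (Haar-induced) probability
   measure d psi on unit vectors of C^2, i.e. the normalized round measure
   on S^3, written in Hopf coordinates: the volume element is
   sin a cos a da db dg and the total volume is 2 pi^2. *)
Definition haar_int (f : vec2 -> R) : R :=
  / (2 * PI ^ 2) *
  RInt (fun a =>
    RInt (fun b =>
      RInt (fun g => f (hopf_psi a b g) * sin a * cos a) 0 (2 * PI))
      0 (2 * PI))
    0 (PI / 2).

(* In Hopf coordinates psi = (cos a e^{ib}, sin a e^{ig}) the expectation value is
   <psi|X|psi> = A + U e^{ig} + V e^{-ig}, where A depends on a only and U, V carry the
   phases e^{-ib}, e^{ib}.  Averaging over g is Parseval's identity for trigonometric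
   polynomials of degree at most 4: the mean of |z|^2 is m = |A|^2 + |U|^2 + |V|^2 and the
   mean of |z|^4 is m^2 + 2 |conj A U + A conj V|^2 + 2 |U conj V|^2.  A unitary X has the
   form [[x, -d conj y]; [y, d conj x]] with |d| = 1, which turns both means into
   polynomials in u = sin^2 a; this substitution makes the remaining Hopf weight uniform on
   [0, 1].  Integrating gives F = (2 + t)/6 and E|<psi|X|psi>|^4 = F^2 + ((4 - t)/6)^2 / 5
   with t = |tr X|^2 <= 4, hence D = (1 - F) / sqrt 5. *)

From Stdlib Require Import Reals Lra Lia List.
Import ListNotations.
From Coquelicot Require Import Coquelicot.
Open Scope R_scope.

Lemma cos_pow2 x : cos x ^ 2 = 1 - sin x ^ 2.
Proof. rewrite <- (sin2_cos2 x). unfold Rsqr. ring. Qed.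

Lemma cis_add x y : cis (x + y) = (cis x * cis y)%C.
Proof. unfold cis, Cmult; simpl. rewrite cos_plus, sin_plus. f_equal; ring. Qed.

Lemma cis_0 : cis 0 = 1%C.
Proof. unfold cis. rewrite cos_0, sin_0. reflexivity. Qed.

Lemma cis_neq0 x : cis x <> 0%C.
Proof.
  intros E. assert (H := cis_add x (- x)). rewrite Rplus_opp_r, cis_0, E, Cmult_0_l in H.
  exact (C1_nz H).
Qed.

Lemma cis_neg x : cis (- x) = (/ cis x)%C.
Proof.
  rewrite <- (Cmult_1_l (/ cis x)), <- cis_0, <- (Rplus_opp_r x), cis_add.
  field. apply cis_neq0.
Qed.

Lemma Cconj_cis x : Cconj (cis x) = cis (- x).
Proof. unfold cis, Cconj; simpl. rewrite cos_neg, sin_neg. reflexivity. Qed.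

Lemma Cconj_cis_pow x n : Cconj (cis x ^ n) = (/ cis x ^ n)%C.
Proof. rewrite Cpow_conj, Cconj_cis, cis_neg, Cpow_inv; [reflexivity | apply cis_neq0]. Qed.

Lemma cis_INR_mult n x : cis (INR n * x) = (cis x ^ n)%C.
Proof.
  induction n as [|n IH]; simpl Cpow.
  - now rewrite Rmult_0_l, cis_0.
  - rewrite S_INR, Rmult_plus_distr_r, Rmult_1_l, cis_add, IH. ring.
Qed.

Lemma Cconj_RtoC (x : R) : Cconj x = x.
Proof. unfold Cconj, RtoC; simpl. now rewrite Ropp_0. Qed.

(* Real identities between moduli and real parts are checked in C, where
   Cmod z ^ 2 = z * conj z, Re z = (z + conj z) / 2 and conj (cis x) = / cis x,
   so that [field] can finish. *)
Ltac push_RtoC :=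
  repeat first
    [ rewrite Cmod2_conj | rewrite re_alt | rewrite RtoC_plus | rewrite RtoC_mult
    | rewrite RtoC_minus | rewrite RtoC_opp | rewrite RtoC_pow ].

Ltac push_Cconj :=
  repeat first
    [ rewrite Cplus_conj | rewrite Cminus_conj | rewrite Cmult_conj | rewrite Copp_conj
    | rewrite Cconj_conj | rewrite Cconj_RtoC | rewrite Cconj_cis_pow
    | rewrite Cinv_conj by apply cis_neq0 | rewrite Cconj_cis | rewrite cis_neg ].

Fixpoint harmonics (n : nat) (cs : list C) (t : R) : R :=
  match cs with
  | nil => 0
  | c :: cs' => Re (c * cis (INR n * t)) + harmonics (S n) cs' t
  end.

Lemma is_RInt_antiderivative (f F : R -> R) (a b l : R) :
  (forall x, is_derive F x (f x)) -> (forall x, continuous f x) ->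
  F b - F a = l -> is_RInt f a b l.
Proof.
  intros HF Hf <-. apply (is_RInt_derive F f); intros x _; [apply HF | apply Hf].
Qed.

Lemma is_RInt_harmonic (c : C) (n : nat) :
  (0 < n)%nat -> is_RInt (fun t => Re (c * cis (INR n * t))) 0 (2 * PI) 0.
Proof.
  intros Hn. assert (Hn' : INR n <> 0) by (apply not_0_INR; lia).
  unfold cis, Cmult, Re; cbn [fst snd].
  apply (is_RInt_antiderivative _ (fun t => (fst c * sin (INR n * t) + snd c * cos (INR n * t)) / INR n)).
  - intros t. auto_derive; [easy|]. field. exact Hn'.
  - intros t. apply (ex_derive_continuous (fun t => fst c * cos (INR n * t) - snd c * sin (INR n * t))).
    auto_derive. easy.
  - replace (INR n * (2 * PI)) with (0 + 2 * INR n * PI) by ring.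
    rewrite cos_period, sin_period, Rmult_0_r. field. exact Hn'.
Qed.

Lemma is_RInt_harmonics (n : nat) (cs : list C) :
  (0 < n)%nat -> is_RInt (harmonics n cs) 0 (2 * PI) 0.
Proof.
  revert n; induction cs as [|c cs IH]; intros n Hn; simpl.
  - pose proof (is_RInt_const 0 (2 * PI) 0) as H.
    unfold scal in H; simpl in H; unfold mult in H; simpl in H.
    rewrite Rmult_0_r in H. exact H.
  - pose proof (is_RInt_plus _ _ 0 (2 * PI) 0 0
      (is_RInt_harmonic c n Hn) (IH (S n) ltac:(lia))) as H.
    unfold plus in H; simpl in H. rewrite Rplus_0_r in H. exact H.
Qed.

Lemma is_RInt_trig_poly (K : R) (cs : list C) :
  is_RInt (fun t => K + harmonics 1 cs t) 0 (2 * PI) (2 * PI * K).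
Proof.
  pose proof (is_RInt_plus _ _ 0 (2 * PI) _ _
    (is_RInt_const 0 (2 * PI) K) (is_RInt_harmonics 1 cs ltac:(lia))) as H.
  unfold plus, scal in H; simpl in H; unfold mult in H; simpl in H.
  replace (2 * PI * K) with ((2 * PI - 0) * K + 0) by ring. exact H.
Qed.

Lemma Cmod2_circle (A U V : C) (t : R) :
  Cmod (A + U * cis t + V * cis (- t)) ^ 2
  = Cmod A ^ 2 + Cmod U ^ 2 + Cmod V ^ 2
    + harmonics 1 [(2 * (Cconj A * U + A * Cconj V))%C; (2 * (U * Cconj V))%C] t.
Proof.
  cbn [harmonics]. rewrite !cis_INR_mult, cis_neg.
  apply RtoC_inj. push_RtoC. push_Cconj. field. apply cis_neq0.
Qed.

Lemma trig_poly2_sq (m : R) (P Q : C) (t : R) :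
  (m + harmonics 1 [(2 * P)%C; (2 * Q)%C] t) ^ 2
  = m ^ 2 + 2 * (Cmod P ^ 2 + Cmod Q ^ 2)
    + harmonics 1 [(4 * (m * P + Cconj P * Q))%C; (4 * m * Q + 2 * P * P)%C;
                   (4 * P * Q)%C; (2 * Q * Q)%C] t.
Proof.
  cbn [harmonics]. rewrite !cis_INR_mult.
  apply RtoC_inj. push_RtoC. push_Cconj. field. apply cis_neq0.
Qed.

Lemma is_RInt_Cmod2_circle (A U V : C) :
  is_RInt (fun t => Cmod (A + U * cis t + V * cis (- t)) ^ 2) 0 (2 * PI)
    (2 * PI * (Cmod A ^ 2 + Cmod U ^ 2 + Cmod V ^ 2)).
Proof.
  eapply is_RInt_ext; [intros t _; symmetry; apply Cmod2_circle | apply is_RInt_trig_poly].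
Qed.

Lemma is_RInt_Cmod4_circle (A U V : C) :
  is_RInt (fun t => Cmod (A + U * cis t + V * cis (- t)) ^ 4) 0 (2 * PI)
    (2 * PI * ((Cmod A ^ 2 + Cmod U ^ 2 + Cmod V ^ 2) ^ 2
               + 2 * (Cmod (Cconj A * U + A * Cconj V) ^ 2 + Cmod (U * Cconj V) ^ 2))).
Proof.
  eapply is_RInt_ext; [intros t _ | apply is_RInt_trig_poly].
  replace (Cmod _ ^ 4) with ((Cmod (A + U * cis t + V * cis (- t)) ^ 2) ^ 2) by ring.
  rewrite Cmod2_circle, trig_poly2_sq. reflexivity.
Qed.

Lemma is_RInt_Cmod2_circle_phase (A u v : C) (t b : R) :
  is_RInt (fun g => Cmod (A + RtoC t * u * cis (- b) * cis g + RtoC t * v * cis b * cis (- g)) ^ 2)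
    0 (2 * PI) (2 * PI * (Cmod A ^ 2 + t ^ 2 * (Cmod u ^ 2 + Cmod v ^ 2))).
Proof.
  replace (2 * PI * _) with (2 * PI * (Cmod A ^ 2 + Cmod (RtoC t * u * cis (- b)) ^ 2
                                        + Cmod (RtoC t * v * cis b) ^ 2)).
  - apply is_RInt_Cmod2_circle.
  - apply RtoC_inj. push_RtoC. push_Cconj. field. apply cis_neq0.
Qed.

Lemma is_RInt_Cmod4_circle_phase (A u v : C) (t b : R) :
  is_RInt (fun g => Cmod (A + RtoC t * u * cis (- b) * cis g + RtoC t * v * cis b * cis (- g)) ^ 4)
    0 (2 * PI) (2 * PI * ((Cmod A ^ 2 + t ^ 2 * (Cmod u ^ 2 + Cmod v ^ 2)) ^ 2
      + 2 * t ^ 2 * (Cmod (Cconj A * u + A * Cconj v) ^ 2 + t ^ 2 * (Cmod u ^ 2 * Cmod v ^ 2)))).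
Proof.
  set (U := (RtoC t * u * cis (- b))%C). set (V := (RtoC t * v * cis b)%C).
  replace (2 * PI * _) with (2 * PI * ((Cmod A ^ 2 + Cmod U ^ 2 + Cmod V ^ 2) ^ 2
      + 2 * (Cmod (Cconj A * U + A * Cconj V) ^ 2 + Cmod (U * Cconj V) ^ 2))).
  - apply is_RInt_Cmod4_circle.
  - unfold U, V. apply RtoC_inj. push_RtoC. push_Cconj. field. apply cis_neq0.
Qed.

Lemma is_RInt_poly_Beta (P : R -> R) (c0 c1 c2 : R) :
  (forall u, P u = c0 + c1 * (u * (1 - u)) + c2 * (u * (1 - u)) ^ 2) ->
  is_RInt P 0 1 (c0 + c1 / 6 + c2 / 30).
Proof.
  intros HP. apply (is_RInt_ext (fun u => c0 + c1 * (u * (1 - u)) + c2 * (u * (1 - u)) ^ 2));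
    [intros u _; symmetry; apply HP |].
  apply (is_RInt_antiderivative _
    (fun u => c0 * u + c1 * (u ^ 2 / 2 - u ^ 3 / 3) + c2 * (u ^ 3 / 3 - u ^ 4 / 2 + u ^ 5 / 5))).
  - intros u. auto_derive; [easy | field].
  - intros u. apply (ex_derive_continuous (fun u => c0 + c1 * (u * (1 - u)) + c2 * (u * (1 - u)) ^ 2)).
    auto_derive. easy.
  - field.
Qed.

Lemma expval_hopf (X : mat2) (a b g : R) :
  expval X (hopf_psi a b g)
  = (RtoC (cos a ^ 2) * X 0%nat 0%nat + RtoC (sin a ^ 2) * X 1%nat 1%nat
     + RtoC (cos a * sin a) * X 0%nat 1%nat * cis (- b) * cis g
     + RtoC (cos a * sin a) * X 1%nat 0%nat * cis b * cis (- g))%C.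
Proof.
  unfold expval, hopf_psi; simpl Nat.eqb; cbv iota.
  push_Cconj. rewrite RtoC_pow, RtoC_pow, !RtoC_mult.
  field. split; apply cis_neq0.
Qed.

Lemma is_RInt_sin2_subst (P : R -> R) (l : R) :
  (forall u, ex_derive P u) -> is_RInt P 0 1 l ->
  is_RInt (fun a => P (sin a ^ 2) * (sin a * cos a)) 0 (PI / 2) (l / 2).
Proof.
  intros HP HPl.
  assert (Hsub : is_RInt (fun a => scal (2 * sin a * cos a) (P (sin a ^ 2))) 0 (PI / 2) l).
  { replace l with (RInt P (sin 0 ^ 2) (sin (PI / 2) ^ 2)).
    - apply (is_RInt_comp P (fun x => sin x ^ 2) (fun x => 2 * sin x * cos x)).
      + intros x _. exact (ex_derive_continuous P _ (HP _)).
      + intros x _. split.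
        * auto_derive; [easy | ring].
        * apply (ex_derive_continuous (fun x => 2 * sin x * cos x)). auto_derive. easy.
    - rewrite sin_0, sin_PI2, pow_ne_zero, pow1 by lia.
      now apply is_RInt_unique. }
  apply (is_RInt_scal _ _ _ (/ 2)) in Hsub.
  replace (l / 2) with (scal (/ 2) l) by (unfold scal; simpl; unfold mult; simpl; field).
  eapply is_RInt_ext; [| exact Hsub].
  intros a _. unfold scal; simpl; unfold mult; simpl. field.
Qed.

(* P (sin a ^ 2) is the mean of f over the Hopf circle at latitude a; the substitution
   u = sin a ^ 2 turns the weight sin a cos a da into du / 2. *)
Lemma haar_int_sin2 (f : vec2 -> R) (P : R -> R) (l : R) :
  (forall a b, is_RInt (fun g => f (hopf_psi a b g)) 0 (2 * PI) (2 * PI * P (sin a ^ 2))) ->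
  (forall u, ex_derive P u) -> is_RInt P 0 1 l ->
  haar_int f = l.
Proof.
  intros Hcircle HP HPl. unfold haar_int.
  assert (Hg : forall a b,
    RInt (fun g => f (hopf_psi a b g) * sin a * cos a) 0 (2 * PI)
    = 2 * PI * (P (sin a ^ 2) * (sin a * cos a))).
  { intros a b. apply is_RInt_unique.
    replace (2 * PI * (P (sin a ^ 2) * (sin a * cos a)))
      with (scal (sin a * cos a) (2 * PI * P (sin a ^ 2)))
      by (unfold scal; simpl; unfold mult; simpl; ring).
    pose proof (is_RInt_scal _ 0 (2 * PI) (sin a * cos a) _ (Hcircle a b)) as H.
    eapply is_RInt_ext; [| exact H].
    intros g _. unfold scal; simpl; unfold mult; simpl. ring. }
  rewrite (RInt_ext (fun a => RInt _ 0 (2 * PI))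
             (fun a => 4 * PI ^ 2 * (P (sin a ^ 2) * (sin a * cos a)))).
  - pose proof (is_RInt_scal _ _ _ (4 * PI ^ 2) _ (is_RInt_sin2_subst P l HP HPl)) as H.
    replace (RInt _ 0 (PI / 2)) with (scal (4 * PI ^ 2) (l / 2))
      by (symmetry; apply is_RInt_unique; exact H).
    unfold scal; simpl; unfold mult; simpl. field. apply PI_neq0.
  - intros a _. rewrite (RInt_ext _ (fun _ => 2 * PI * (P (sin a ^ 2) * (sin a * cos a)))).
    + rewrite RInt_const. unfold scal; simpl; unfold mult; simpl. ring.
    + intros b _. apply Hg.
Qed.

Section Unitary2.

Variable X : mat2.
Hypothesis hX : unitary2 X.

Local Notation x00 := (X 0%nat 0%nat).
Local Notation x01 := (X 0%nat 1%nat).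
Local Notation x10 := (X 1%nat 0%nat).
Local Notation x11 := (X 1%nat 1%nat).

Lemma unitary2_normal_form :
  exists d : C, d <> 0%C /\ Cconj d = (/ d)%C /\
    x01 = (- d * Cconj x10)%C /\ x11 = (d * Cconj x00)%C.
Proof.
  assert (H00 := hX 0%nat 0%nat ltac:(lia) ltac:(lia)).
  assert (H11 := hX 1%nat 1%nat ltac:(lia) ltac:(lia)).
  assert (H01 := hX 0%nat 1%nat ltac:(lia) ltac:(lia)).
  simpl Nat.eqb in H00, H11, H01; cbv iota in H00, H11, H01.
  (* d = det X; the normal form is the adjugate formula for X^-1 = X^*. *)
  set (d := (x00 * x11 - x01 * x10)%C).
  assert (Hd : x11 = (d * Cconj x00)%C).
  { transitivity (x11 * (Cconj x00 * x00 + Cconj x10 * x10) - x10 * (Cconj x00 * x01 + Cconj x10 * x11))%C.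
    - rewrite H00, H01. ring.
    - unfold d. ring. }
  assert (Hb : x01 = (- d * Cconj x10)%C).
  { transitivity (x01 * (Cconj x00 * x00 + Cconj x10 * x10) - x00 * (Cconj x00 * x01 + Cconj x10 * x11))%C.
    - rewrite H00, H01. ring.
    - unfold d. ring. }
  assert (Hdd : (Cconj d * d = 1)%C).
  { rewrite <- H11, Hb, Hd, <- (Cmult_1_r (Cconj d * d)), <- H00. push_Cconj. ring. }
  assert (Hd0 : d <> 0%C) by (intros E; rewrite E, Cmult_0_r in Hdd; exact (C1_nz (eq_sym Hdd))).
  exists d. repeat split; try assumption.
  rewrite <- (Cmult_1_l (/ d)), <- Hdd. field. exact Hd0.
Qed.

Lemma unitary2_col (j : nat) : (j < 2)%nat -> Cmod (X 0%nat j) ^ 2 + Cmod (X 1%nat j) ^ 2 = 1.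
Proof.
  intros Hj. assert (Hjj := hX j j Hj Hj). rewrite Nat.eqb_refl in Hjj.
  apply RtoC_inj. push_RtoC. rewrite <- Hjj. ring.
Qed.

Lemma unitary2_Cmod2_offdiag : Cmod x01 ^ 2 = Cmod x10 ^ 2.
Proof.
  destruct unitary2_normal_form as (d & Hd0 & Hdc & Hb & _). rewrite Hb.
  apply RtoC_inj. push_RtoC. push_Cconj. rewrite Hdc. field. exact Hd0.
Qed.

Lemma unitary2_Cmod2_diag (r s : R) :
  Cmod (RtoC r * x00 + RtoC s * x11) ^ 2
  = (r ^ 2 + s ^ 2) * Cmod x00 ^ 2 + 2 * r * s * Re (Cconj x00 * x11).
Proof.
  destruct unitary2_normal_form as (d & Hd0 & Hdc & _ & Hd). rewrite Hd.
  apply RtoC_inj. push_RtoC. push_Cconj. rewrite Hdc. field. exact Hd0.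
Qed.

Lemma unitary2_cross (r s : R) :
  (Cconj (RtoC r * x00 + RtoC s * x11) * x01 + (RtoC r * x00 + RtoC s * x11) * Cconj x10
   = RtoC (r - s) * Cconj x10 * (x00 - x11))%C.
Proof.
  destruct unitary2_normal_form as (d & Hd0 & Hdc & Hb & Hd). rewrite Hb, Hd.
  push_Cconj. rewrite Hdc, RtoC_minus. field. exact Hd0.
Qed.

Lemma unitary2_Cmod2_trace :
  Cmod (x00 + x11)%C ^ 2 = 2 * Cmod x00 ^ 2 + 2 * Re (Cconj x00 * x11).
Proof.
  destruct unitary2_normal_form as (d & Hd0 & Hdc & _ & Hd). rewrite Hd.
  apply RtoC_inj. push_RtoC. push_Cconj. rewrite Hdc. field. exact Hd0.
Qed.

Lemma unitary2_Cmod2_diag_sub :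
  Cmod (x00 - x11)%C ^ 2 = 2 * Cmod x00 ^ 2 - 2 * Re (Cconj x00 * x11).
Proof.
  destruct unitary2_normal_form as (d & Hd0 & Hdc & _ & Hd). rewrite Hd.
  apply RtoC_inj. push_RtoC. push_Cconj. rewrite Hdc. field. exact Hd0.
Qed.

Lemma unitary2_Cmod2_trace_le : Cmod (x00 + x11)%C ^ 2 <= 4.
Proof.
  assert (H0 := unitary2_col 0 ltac:(lia)). assert (H1 := unitary2_col 1 ltac:(lia)).
  assert (Ht := Cmod_triangle x00 x11).
  assert (0 <= Cmod x00 <= 1) by (split; [apply Cmod_ge_0 | pose proof (Cmod_ge_0 x10); nra]).
  assert (0 <= Cmod x11 <= 1) by (split; [apply Cmod_ge_0 | pose proof (Cmod_ge_0 x01); nra]).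
  pose proof (Cmod_ge_0 (x00 + x11)). nra.
Qed.

Lemma haar_moment2 :
  haar_int (fun psi => Cmod (expval X psi) ^ 2) = (2 + Cmod (x00 + x11)%C ^ 2) / 6.
Proof.
  set (α := Cmod x00 ^ 2). set (γ := Cmod x10 ^ 2). set (κ := Re (Cconj x00 * x11)).
  apply (haar_int_sin2 _ (fun u => α + 2 * (u * (1 - u)) * (κ + γ - α))).
  - intros a b. eapply is_RInt_ext; [intros g _; rewrite expval_hopf; reflexivity |].
    replace (2 * PI * _) with (2 * PI *
      (Cmod (RtoC (cos a ^ 2) * x00 + RtoC (sin a ^ 2) * x11) ^ 2
       + (cos a * sin a) ^ 2 * (Cmod x01 ^ 2 + Cmod x10 ^ 2))).
    + apply is_RInt_Cmod2_circle_phase.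
    + rewrite unitary2_Cmod2_diag, unitary2_Cmod2_offdiag, Rpow_mult_distr, cos_pow2.
      fold α γ κ. ring.
  - intros u. auto_derive. easy.
  - replace ((2 + _) / 6) with (α + 2 * (κ + γ - α) / 6 + 0 / 30).
    + apply is_RInt_poly_Beta. intros u. ring.
    + rewrite unitary2_Cmod2_trace. fold α κ.
      replace γ with (1 - α) by (unfold α, γ; rewrite <- (unitary2_col 0 ltac:(lia)); ring). field.
Qed.

Lemma haar_moment4 :
  haar_int (fun psi => Cmod (expval X psi) ^ 4)
  = ((2 + Cmod (x00 + x11)%C ^ 2) / 6) ^ 2 + ((4 - Cmod (x00 + x11)%C ^ 2) / 6) ^ 2 / 5.
Proof.
  set (α := Cmod x00 ^ 2). set (γ := Cmod x10 ^ 2). set (κ := Re (Cconj x00 * x11)).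
  apply (haar_int_sin2 _ (fun u => (α + 2 * (u * (1 - u)) * (κ + γ - α)) ^ 2
    + 2 * (u * (1 - u)) * ((1 - 2 * u) ^ 2 * γ * (2 * α - 2 * κ) + u * (1 - u) * γ ^ 2))).
  - intros a b. eapply is_RInt_ext; [intros g _; rewrite expval_hopf; reflexivity |].
    set (A := (RtoC (cos a ^ 2) * x00 + RtoC (sin a ^ 2) * x11)%C).
    replace (2 * PI * _) with (2 * PI *
      ((Cmod A ^ 2 + (cos a * sin a) ^ 2 * (Cmod x01 ^ 2 + Cmod x10 ^ 2)) ^ 2
       + 2 * (cos a * sin a) ^ 2 * (Cmod (Cconj A * x01 + A * Cconj x10) ^ 2
                                    + (cos a * sin a) ^ 2 * (Cmod x01 ^ 2 * Cmod x10 ^ 2)))).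
    + apply is_RInt_Cmod4_circle_phase.
    + unfold A. rewrite unitary2_cross, unitary2_Cmod2_diag, unitary2_Cmod2_offdiag, !Cmod_mult,
        Cmod_R, Cmod_conj, !Rpow_mult_distr, pow2_abs, unitary2_Cmod2_diag_sub, cos_pow2.
      fold α γ κ. ring.
  - intros u. auto_derive. easy.
  - set (e := κ + γ - α). set (L := 2 * α - 2 * κ).
    replace (_ + _ / 5) with (α ^ 2 + (4 * α * e + 2 * γ * L) / 6
                              + (4 * e ^ 2 - 8 * γ * L + 2 * γ ^ 2) / 30).
    + apply is_RInt_poly_Beta. intros u. unfold e, L. ring.
    + rewrite unitary2_Cmod2_trace. fold α κ. unfold e, L.
      replace γ with (1 - α) by (unfold α, γ; rewrite <- (unitary2_col 0 ltac:(lia)); ring). field.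
Qed.

End Unitary2.

Theorem proposition9 (X : mat2) (hX : unitary2 X) :
  let F := haar_int (fun psi => Cmod (expval X psi) ^ 2) in
  let D := sqrt (haar_int (fun psi => Cmod (expval X psi) ^ 4) - F ^ 2) in
  D = (1 - F) / sqrt 5.
Proof.
  intros F D. unfold D, F. rewrite (haar_moment4 X hX), (haar_moment2 X hX).
  assert (Htr := unitary2_Cmod2_trace_le X hX).
  set (tr := Cmod (X 0%nat 0%nat + X 1%nat 1%nat)%C ^ 2) in *.
  replace (((2 + tr) / 6) ^ 2 + ((4 - tr) / 6) ^ 2 / 5 - ((2 + tr) / 6) ^ 2)
    with (((4 - tr) / 6) ^ 2 / 5) by ring.
  rewrite sqrt_div_alt, sqrt_pow2 by lra. f_equal. field.
Qed.
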